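(* Let $V$ be a finite dimensional normed vector space and $H\le O(V)$. Let $L_i:H\to\mathbb{R}$ be group-norms such that the functions $d_i(u,v)=\inf_{a\in H}\sqrt{L_i(a)^2+\|au-v\|^2}$ converge uniformly on compact sets to a semi-metric $d_\infty$ on $V$. Let $$G_0=\{g\in O(V):\ \exists\,a_i\in H\text{ with } a_i\to g \text{ and }\liminf_{i\to\infty}L_i(a_i)=0\}.$$ Then for $u,v\in V$, $d_\infty(u,v)=0$ if and only if $v=gu$ for some $g\in G_0$.
   Context: $O(V)$ is the group of norm-preserving linear maps of $V$. A group-norm on $H$ is $L:H\to\mathbb{R}$ with $L(a)\ge0$, $L(a)=0$ iff $a=e$, $L(a^{-1})=L(a)$, $L(ab)\le L(a)+L(b)$. *)

From Stdlib Require Import Reals Lra List.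
From Stdlib Require Fin.
Open Scope R_scope.

(* A finite dimensional real vector space, modelled as R^n = (Fin.t n -> R),
   equipped with an ARBITRARY norm N (every finite-dimensional normed space is
   isometrically isomorphic to such a space). *)
Definition vec (n : nat) : Type := Fin.t n -> R.
Definition vadd {n} (x y : vec n) : vec n := fun k => x k + y k.
Definition vscal {n} (c : R) (x : vec n) : vec n := fun k => c * x k.
Definition vsub {n} (x y : vec n) : vec n := fun k => x k - y k.

Record is_norm {n} (N : vec n -> R) : Prop := {
  norm_nonneg : forall x, 0 <= N x;
  norm_eq0 : forall x, N x = 0 <-> (forall k, x k = 0);
  norm_scal : forall c x, N (vscal c x) = Rabs c * N x;
  norm_triangle : forall x y, N (vadd x y) <= N x + N y }.

Definition linear_map {n} (f : vec n -> vec n) : Prop :=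
  (forall x y, f (vadd x y) = vadd (f x) (f y)) /\
  (forall c x, f (vscal c x) = vscal c (f x)).

Definition in_O {n} (N : vec n -> R) (g : vec n -> vec n) : Prop :=
  linear_map g /\ forall x, N (g x) = N x.

Definition is_subgroup_O {n} (N : vec n -> R) (H : (vec n -> vec n) -> Prop) : Prop :=
  (forall a, H a -> in_O N a) /\
  H (fun x => x) /\
  (forall a b, H a -> H b -> H (fun x => a (b x))) /\
  (forall a, H a -> exists b, H b /\ (forall x, b (a x) = x) /\ (forall x, a (b x) = x)).

Definition group_norm {n} (H : (vec n -> vec n) -> Prop) (L : (vec n -> vec n) -> R) : Prop :=
  (forall a, H a -> 0 <= L a) /\
  (forall a, H a -> (L a = 0 <-> a = (fun x => x))) /\
  (forall a b, H a -> H b -> (forall x, b (a x) = x) -> (forall x, a (b x) = x) -> L b = L a) /\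
  (forall a b, H a -> H b -> L (fun x => a (b x)) <= L a + L b).

Definition is_inf (S : R -> Prop) (r : R) : Prop :=
  (forall x, S x -> r <= x) /\ (forall m, (forall x, S x -> m <= x) -> m <= r).

Definition open2 {n} (N : vec n -> R) (U : vec n -> vec n -> Prop) : Prop :=
  forall u v, U u v -> exists e, 0 < e /\
    forall u' v', N (vsub u' u) < e -> N (vsub v' v) < e -> U u' v'.

Definition compact2 {n} (N : vec n -> R) (K : vec n -> vec n -> Prop) : Prop :=
  forall (I : Type) (U : I -> vec n -> vec n -> Prop),
    (forall i, open2 N (U i)) ->
    (forall u v, K u v -> exists i, U i u v) ->
    exists l : list I, forall u v, K u v -> exists i, In i l /\ U i u v.

Definition unif_cv_compact {n} (N : vec n -> R)
  (d : nat -> vec n -> vec n -> R) (dinf : vec n -> vec n -> R) : Prop :=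
  forall K, compact2 N K -> forall eps, 0 < eps ->
    exists M : nat, forall i, (M <= i)%nat -> forall u v, K u v ->
      Rabs (d i u v - dinf u v) < eps.

Definition semimetric {n} (d : vec n -> vec n -> R) : Prop :=
  (forall u v, 0 <= d u v) /\ (forall u, d u u = 0) /\
  (forall u v, d u v = d v u) /\ (forall u v w, d u w <= d u v + d v w).

Definition liminf_eq (s : nat -> R) (l : R) : Prop :=
  forall eps, 0 < eps ->
    (exists M : nat, forall i, (M <= i)%nat -> l - eps < s i) /\
    (forall M : nat, exists i, (M <= i)%nat /\ s i < l + eps).

Definition in_G0 {n} (N : vec n -> R) (H : (vec n -> vec n) -> Prop)
  (L : nat -> (vec n -> vec n) -> R) (g : vec n -> vec n) : Prop :=
  in_O N g /\
  exists a : nat -> (vec n -> vec n),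
    (forall i, H (a i)) /\
    (forall x, Un_cv (fun i => N (vsub (a i x) (g x))) 0) /\
    liminf_eq (fun i => L i (a i)) 0.

From Stdlib Require Import Reals Lra Lia List ClassicalEpsilon FunctionalExtensionality Rtopology.
Open Scope R_scope.

(* If d_inf(u,v) = 0, pick a_i in H that are almost optimal in the infimum defining
   d_i(u,v); then L_i(a_i) -> 0 and a_i u -> v.  O(V) is sequentially compact (all norms
   on R^n are equivalent to the l1 norm, so the matrix entries stay bounded), hence a
   subsequence converges to some g in O(V), and g u = v.  Filling the gaps of the
   subsequence with later terms of it gives a sequence in H converging to g along which
   liminf L_i = 0, so g is in G_0.  Conversely, d_i(u, g u) <= L_i(a_i) + |a_i u - g u|,
   which is small for infinitely many i, so d_inf(u, g u) = 0. *)

Lemma Un_cv_const (c : R) : Un_cv (fun _ => c) c.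
Proof.
  intros eps Heps. exists O. intros k _. unfold R_dist.
  rewrite Rminus_diag, Rabs_R0. lra.
Qed.

Lemma Un_cv_squeeze_0 (f r : nat -> R) :
  (forall k, 0 <= f k <= r k) -> Un_cv r 0 -> Un_cv f 0.
Proof.
  intros Hfr Hr eps Heps. destruct (Hr eps Heps) as [M HM]. exists M. intros k Hk.
  specialize (HM k Hk). specialize (Hfr k). unfold R_dist in *.
  rewrite Rminus_0_r in *. rewrite Rabs_right in * by lra. lra.
Qed.

Lemma Un_cv_le_lim (a l : R) (r : nat -> R) : (forall k, a <= r k) -> Un_cv r l -> a <= l.
Proof. intros Har Hr. exact (Rle_cv_lim Har (Un_cv_const a) Hr). Qed.

Definition tends_to_infty (f : nat -> nat) : Prop :=
  forall K, exists M, forall i, (M <= i)%nat -> (K <= f i)%nat.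

Lemma Un_cv_comp (u : nat -> R) (l : R) (f : nat -> nat) :
  tends_to_infty f -> Un_cv u l -> Un_cv (fun i => u (f i)) l.
Proof.
  intros Hf Hu eps Heps. destruct (Hu eps Heps) as [K HK]. destruct (Hf K) as [M HM].
  exists M. intros i Hi. apply HK, HM, Hi.
Qed.

Definition strictly_incr (phi : nat -> nat) : Prop := forall k, (phi k < phi (S k))%nat.

Section StrictlyIncreasing.

Variable phi : nat -> nat.
Hypothesis Hphi : strictly_incr phi.

Lemma strictly_incr_lt k1 k2 : (k1 < k2)%nat -> (phi k1 < phi k2)%nat.
Proof. induction 1; [apply Hphi | specialize (Hphi m); lia]. Qed.

Lemma strictly_incr_le_inv k1 k2 : (phi k1 <= phi k2)%nat -> (k1 <= k2)%nat.
Proof.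
  intros Hle. destruct (Nat.le_gt_cases k1 k2) as [|Hlt]; [assumption|].
  pose proof (strictly_incr_lt k2 k1 Hlt). lia.
Qed.

Lemma strictly_incr_ge_id k : (k <= phi k)%nat.
Proof. induction k; [lia | specialize (Hphi k); lia]. Qed.

Lemma strictly_incr_tends_to_infty : tends_to_infty phi.
Proof. intros K. exists K. intros i Hi. pose proof (strictly_incr_ge_id i). lia. Qed.

(* Outside the range of [phi] the inverse is the identity, so it still tends to infinity. *)
Lemma strictly_incr_left_inverse :
  exists f, tends_to_infty f /\ forall k, f (phi k) = k.
Proof.
  destruct (choice (fun i k => phi k = i \/ ((forall k', phi k' <> i) /\ k = i)))
    as [f Hf].
  { intros i. destruct (classic (exists k, phi k = i)) as [[k Hk]|Hnot].
    - exists k. now left.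
    - exists i. right. split; [|reflexivity]. intros k' Hk'. apply Hnot. now exists k'. }
  exists f. split.
  - intros K. exists (phi K). intros i Hi. destruct (Hf i) as [Hfi|[_ ->]].
    + apply strictly_incr_le_inv. lia.
    + pose proof (strictly_incr_ge_id K). lia.
  - intros k. destruct (Hf (phi k)) as [Hfk|[Hnone _]].
    + apply Nat.le_antisymm; apply strictly_incr_le_inv; lia.
    + exfalso. exact (Hnone k eq_refl).
Qed.

End StrictlyIncreasing.

Lemma strictly_incr_comp (phi psi : nat -> nat) :
  strictly_incr phi -> strictly_incr psi -> strictly_incr (fun k => phi (psi k)).
Proof. intros Hphi Hpsi k. apply strictly_incr_lt; auto. Qed.

Lemma bounded_cv_subseq (u : nat -> R) (B : R) :
  (forall k, Rabs (u k) <= B) ->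
  exists phi, strictly_incr phi /\ exists l, Un_cv (fun k => u (phi k)) l.
Proof.
  intros HB.
  destruct (Bolzano_Weierstrass u (fun x => -B <= x <= B)) as [l Hl].
  { apply compact_P3. }
  { intros k. specialize (HB k). pose proof (Rle_abs (u k)). pose proof (Rle_abs (- u k)).
    rewrite Rabs_Ropp in *. lra. }
  assert (Hclose : forall kN : nat * nat, exists p,
             (snd kN <= p)%nat /\ Rabs (u p - l) < RinvN (fst kN)).
  { intros [k M]. destruct (Hl (disc l (RinvN k)) M) as [p Hp].
    - exists (RinvN k). intros y Hy. exact Hy.
    - exists p. exact Hp. }
  destruct (choice _ Hclose) as [P HP].
  set (phi := fix phi k := match k with
                           | O => P (O, O)
                           | S k' => P (S k', S (phi k'))
                           end).
  assert (Hphi_close : forall k, Rabs (u (phi k) - l) < RinvN k)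
    by (intros [|k]; apply (HP (_, _))).
  exists phi. split.
  - intros k. exact (proj1 (HP (S k, S (phi k)))).
  - exists l.
    assert (Hdist : Un_cv (fun k => Rabs (u (phi k) - l)) 0).
    { apply (Un_cv_squeeze_0 _ (fun k => RinvN k)); [|exact RinvN_cv].
      intros k. split; [apply Rabs_pos | left; apply Hphi_close]. }
    intros eps Heps. destruct (Hdist eps Heps) as [M HM]. exists M. intros k Hk.
    specialize (HM k Hk). unfold R_dist in *. rewrite Rminus_0_r, Rabs_Rabsolu in HM. exact HM.
Qed.

Lemma bounded_family_cv_subseq_ex {I : Type} (l : list I) (s : nat -> I -> R) (B : I -> R) :
  (forall k i, In i l -> Rabs (s k i) <= B i) ->
  exists phi, strictly_incr phi /\
    forall i, In i l -> exists z, Un_cv (fun k => s (phi k) i) z.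
Proof.
  induction l as [|i0 l IH]; intros HB.
  - exists (fun k => k). split; [intros k; lia | intros i []].
  - destruct IH as [phi [Hphi Hcv]]; [intros k i Hi; apply HB; now right|].
    destruct (bounded_cv_subseq (fun k => s (phi k) i0) (B i0)) as [psi [Hpsi [z Hz]]].
    { intros k. apply HB. now left. }
    exists (fun k => phi (psi k)). split; [now apply strictly_incr_comp|].
    intros i [<-|Hi]; [now exists z|].
    destruct (Hcv i Hi) as [z' Hz']. exists z'.
    exact (Un_cv_comp _ _ _ (strictly_incr_tends_to_infty psi Hpsi) Hz').
Qed.

Lemma bounded_family_cv_subseq {I : Type} (l : list I) (s : nat -> I -> R) (B : I -> R) :
  (forall i, In i l) -> (forall k i, Rabs (s k i) <= B i) ->
  exists phi, strictly_incr phi /\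
    exists z : I -> R, forall i, Un_cv (fun k => s (phi k) i) (z i).
Proof.
  intros Hl HB. destruct (bounded_family_cv_subseq_ex l s B) as [phi [Hphi Hcv]]; auto.
  exists phi. split; [exact Hphi|].
  apply (choice (fun i z => Un_cv (fun k => s (phi k) i) z)). intros i. exact (Hcv i (Hl i)).
Qed.

Definition lsum {A : Type} (l : list A) (f : A -> R) : R :=
  fold_right (fun j s => f j + s) 0 l.

Section ListSums.

Context {A : Type}.
Variable l : list A.

Lemma lsum_ext (f g : A -> R) : (forall j, In j l -> f j = g j) -> lsum l f = lsum l g.
Proof.
  induction l as [|j l' IH]; simpl; intros Hfg; [reflexivity|].
  rewrite Hfg, IH by auto. reflexivity.
Qed.

Lemma lsum_0 : lsum l (fun _ => 0) = 0.
Proof. induction l as [|j l' IH]; simpl; [reflexivity | rewrite IH; ring]. Qed.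

Lemma lsum_plus (f g : A -> R) : lsum l (fun j => f j + g j) = lsum l f + lsum l g.
Proof. induction l as [|j l' IH]; simpl; [ring | rewrite IH; ring]. Qed.

Lemma lsum_scal (c : R) (f : A -> R) : lsum l (fun j => c * f j) = c * lsum l f.
Proof. induction l as [|j l' IH]; simpl; [ring | rewrite IH; ring]. Qed.

Lemma lsum_le (f g : A -> R) : (forall j, f j <= g j) -> lsum l f <= lsum l g.
Proof.
  intros Hfg. induction l as [|j l' IH]; simpl; [lra|]. specialize (Hfg j). lra.
Qed.

Lemma lsum_nonneg (f : A -> R) : (forall j, 0 <= f j) -> 0 <= lsum l f.
Proof. intros Hf. rewrite <- lsum_0. now apply lsum_le. Qed.

Lemma lsum_cv (f : nat -> A -> R) (g : A -> R) :
  (forall j, Un_cv (fun k => f k j) (g j)) -> Un_cv (fun k => lsum l (f k)) (lsum l g).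
Proof.
  intros Hfg. induction l as [|j l' IH]; simpl.
  - apply Un_cv_const.
  - now apply CV_plus.
Qed.

End ListSums.

Lemma lsum_term {A : Type} (l : list A) (f : A -> R) (j : A) :
  (forall j, 0 <= f j) -> In j l -> f j <= lsum l f.
Proof.
  intros Hf Hj. induction l as [|j' l IH]; simpl; [destruct Hj|].
  destruct Hj as [<-|Hj].
  - pose proof (lsum_nonneg l f Hf). lra.
  - pose proof (IH Hj). pose proof (Hf j'). lra.
Qed.

Lemma lsum_delta {n} (l : list (Fin.t n)) (f : Fin.t n -> R) (k : Fin.t n) :
  NoDup l -> In k l ->
  lsum l (fun j => f j * (if Fin.eq_dec j k then 1 else 0)) = f k.
Proof.
  induction 1 as [|j l Hj Hl IH]; simpl; [intros []|]. intros Hk.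
  destruct (Fin.eq_dec j k) as [->|Hne].
  - rewrite (lsum_ext _ _ (fun _ => 0)), lsum_0; [ring|].
    intros j' Hj'. destruct (Fin.eq_dec j' k) as [->|]; [contradiction | ring].
  - destruct Hk as [->|Hk]; [now contradiction Hne|]. rewrite IH by exact Hk. ring.
Qed.

Fixpoint enum (n : nat) : list (Fin.t n) :=
  match n with
  | O => nil
  | S m => Fin.F1 :: map Fin.FS (enum m)
  end.

Lemma enum_In {n} (k : Fin.t n) : In k (enum n).
Proof. induction k; simpl; [now left | right; now apply in_map]. Qed.

Lemma enum_NoDup n : NoDup (enum n).
Proof.
  induction n as [|n IH]; simpl; constructor.
  - intros Hin. apply in_map_iff in Hin. destruct Hin as [k [Hk _]]. inversion Hk.
  - apply NoDup_map_NoDup_ForallPairs; [intros x y _ _; apply Fin.FS_inj | exact IH].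
Qed.

Definition ebas {n} (j : Fin.t n) : vec n := fun k => if Fin.eq_dec j k then 1 else 0.

(* The combination [sum_(j in l) c j * w j], built from [vadd] and [vscal] so that the
   norm axioms apply to it. *)
Definition lc {n} (l : list (Fin.t n)) (c : Fin.t n -> R) (w : Fin.t n -> vec n) : vec n :=
  fold_right (fun j acc => vadd (vscal (c j) (w j)) acc) (fun _ => 0) l.

Lemma lc_coord {n} l c (w : Fin.t n -> vec n) k : lc l c w k = lsum l (fun j => c j * w j k).
Proof. induction l as [|j l IH]; simpl; [reflexivity | unfold vadd, vscal; now rewrite IH]. Qed.

Lemma vec_decomp {n} (x : vec n) : x = lc (enum n) x ebas.
Proof.
  apply functional_extensionality. intros k. rewrite lc_coord.
  unfold ebas. symmetry. apply lsum_delta; [apply enum_NoDup | apply enum_In].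
Qed.

Section LinearMaps.

Context {n : nat}.
Variable f : vec n -> vec n.
Hypothesis Hf : linear_map f.

Lemma linear_map_zero : f (fun _ => 0) = (fun _ => 0).
Proof.
  destruct Hf as [_ Hscal].
  assert (Hz : (fun _ : Fin.t n => 0) = vscal 0 (fun _ : Fin.t n => 0)).
  { apply functional_extensionality. intros k. unfold vscal. ring. }
  rewrite Hz, Hscal. apply functional_extensionality. intros k. unfold vscal. ring.
Qed.

Lemma linear_map_lc l c w : f (lc l c w) = lc l c (fun j => f (w j)).
Proof.
  induction l as [|j l IH]; simpl; [exact linear_map_zero|].
  destruct Hf as [Hadd Hscal]. now rewrite Hadd, Hscal, IH.
Qed.

Lemma linear_map_coord x k : f x k = lsum (enum n) (fun j => x j * f (ebas j) k).
Proof. rewrite (vec_decomp x) at 1. now rewrite linear_map_lc, lc_coord. Qed.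

End LinearMaps.

Definition l1norm {n} (x : vec n) : R := lsum (enum n) (fun j => Rabs (x j)).

Lemma Rabs_coord_le_l1norm {n} (x : vec n) k : Rabs (x k) <= l1norm x.
Proof. apply (lsum_term _ (fun j => Rabs (x j))); [intros; apply Rabs_pos | apply enum_In]. Qed.

Lemma l1norm_scal {n} c (x : vec n) : l1norm (vscal c x) = Rabs c * l1norm x.
Proof.
  unfold l1norm, vscal. rewrite <- lsum_scal. apply lsum_ext. intros j _. apply Rabs_mult.
Qed.

Lemma l1norm_cv {n} (y : nat -> vec n) (z : vec n) :
  (forall j, Un_cv (fun k => y k j) (z j)) -> Un_cv (fun k => l1norm (y k)) (l1norm z).
Proof. intros Hyz. apply lsum_cv. intros j. now apply cv_cvabs. Qed.

Section Norm.

Context {n : nat}.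
Variable N : vec n -> R.
Hypothesis HN : is_norm N.

Lemma norm_zero : N (fun _ => 0) = 0.
Proof. now apply (norm_eq0 N HN). Qed.

Lemma norm_lc l c w : N (lc l c w) <= lsum l (fun j => Rabs (c j) * N (w j)).
Proof.
  induction l as [|j l IH]; simpl; [rewrite norm_zero; lra|].
  eapply Rle_trans; [apply (norm_triangle N HN)|]. rewrite (norm_scal N HN). lra.
Qed.

Lemma norm_sub_sym x y : N (vsub x y) = N (vsub y x).
Proof.
  replace (vsub x y) with (vscal (-1) (vsub y x)).
  - rewrite (norm_scal N HN), Rabs_left by lra. ring.
  - apply functional_extensionality. intros k. unfold vscal, vsub. ring.
Qed.

Lemma norm_le_sub x y : N x <= N y + N (vsub x y).
Proof.
  replace x with (vadd y (vsub x y)) at 1; [apply (norm_triangle N HN)|].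
  apply functional_extensionality. intros k. unfold vadd, vsub. ring.
Qed.

Lemma norm_le_l1norm : exists C, forall x, N x <= C * l1norm x.
Proof.
  exists (lsum (enum n) (fun m => N (ebas m))). intros x.
  rewrite (vec_decomp x) at 1. eapply Rle_trans; [apply norm_lc|].
  unfold l1norm. rewrite <- lsum_scal. apply lsum_le. intros j.
  rewrite (Rmult_comm _ (Rabs _)). apply Rmult_le_compat_l; [apply Rabs_pos|].
  apply (lsum_term _ (fun m => N (ebas m))); [intros; apply (norm_nonneg N HN) | apply enum_In].
Qed.

Lemma norm_cv_of_coord_cv (y : nat -> vec n) (z : vec n) :
  (forall j, Un_cv (fun k => y k j) (z j)) -> Un_cv (fun k => N (vsub (y k) z)) 0.
Proof.
  intros Hyz. destruct norm_le_l1norm as [C HC].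
  apply (Un_cv_squeeze_0 _ (fun k => C * l1norm (vsub (y k) z))).
  - intros k. split; [apply (norm_nonneg N HN) | apply HC].
  - replace 0 with (C * l1norm (fun _ : Fin.t n => 0)).
    + apply CV_mult; [apply Un_cv_const|]. apply l1norm_cv. intros j.
      unfold vsub. replace 0 with (z j - z j) by ring. apply CV_minus; [apply Hyz | apply Un_cv_const].
    + unfold l1norm. rewrite (lsum_ext _ _ (fun _ => 0)), lsum_0; [ring|].
      intros j _. apply Rabs_R0.
Qed.

Lemma Un_cv_norm (y : nat -> vec n) (z : vec n) :
  Un_cv (fun k => N (vsub (y k) z)) 0 -> Un_cv (fun k => N (y k)) (N z).
Proof.
  intros Hyz eps Heps. destruct (Hyz eps Heps) as [M HM]. exists M. intros k Hk.
  specialize (HM k Hk). unfold R_dist in *. rewrite Rminus_0_r in HM.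
  rewrite Rabs_right in HM by (apply Rle_ge, (norm_nonneg N HN)).
  pose proof (norm_le_sub (y k) z). pose proof (norm_le_sub z (y k)).
  rewrite norm_sub_sym in H0. apply Rabs_def1; lra.
Qed.

Lemma norm_cv_unique (y : nat -> vec n) (v w : vec n) :
  Un_cv (fun k => N (vsub (y k) v)) 0 -> Un_cv (fun k => N (vsub (y k) w)) 0 -> v = w.
Proof.
  intros Hv Hw.
  assert (Hvw : N (vsub v w) <= 0).
  { apply (Un_cv_le_lim _ _ (fun k => N (vsub (y k) v) + N (vsub (y k) w))).
    - intros k. rewrite (norm_sub_sym (y k) v).
      replace (vsub v w) with (vadd (vsub v (y k)) (vsub (y k) w)); [apply (norm_triangle N HN)|].
      apply functional_extensionality. intros m. unfold vadd, vsub. ring.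
    - rewrite <- (Rplus_0_r 0). now apply CV_plus. }
  pose proof (norm_nonneg N HN (vsub v w)).
  assert (Hz : forall k, vsub v w k = 0) by (apply (norm_eq0 N HN); lra).
  apply functional_extensionality. intros k. specialize (Hz k). unfold vsub in Hz. lra.
Qed.

(* Compactness of the l1 unit sphere: a coordinatewise limit point would have l1 norm 1
   and norm 0. *)
Lemma norm_not_cv0_on_l1_sphere (y : nat -> vec n) :
  (forall k, l1norm (y k) = 1) -> ~ Un_cv (fun k => N (y k)) 0.
Proof.
  intros Hy1 Hy0.
  destruct (bounded_family_cv_subseq (enum n) y (fun _ => 1) enum_In) as [phi [Hphi [z Hz]]].
  { intros k j. rewrite <- (Hy1 k). apply Rabs_coord_le_l1norm. }
  assert (Hz1 : l1norm z = 1).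
  { apply (UL_sequence (fun k => l1norm (y (phi k)))); [now apply l1norm_cv|].
    apply (Un_cv_ext (fun _ => 1)); [intros k; now rewrite Hy1 | apply Un_cv_const]. }
  assert (Hz0 : N z = 0).
  { apply (UL_sequence (fun k => N (y (phi k)))).
    - apply Un_cv_norm, norm_cv_of_coord_cv, Hz.
    - exact (Un_cv_comp _ _ _ (strictly_incr_tends_to_infty phi Hphi) Hy0). }
  assert (l1norm z = 0); [|lra].
  unfold l1norm. rewrite (lsum_ext _ _ (fun _ => 0)), lsum_0; [reflexivity|].
  intros j _. rewrite (proj1 (norm_eq0 N HN z) Hz0). apply Rabs_R0.
Qed.

Lemma l1norm_le_norm : exists c, forall x, l1norm x <= c * N x.
Proof.
  apply NNPP. intros Hnone.
  assert (Hbad : forall k : nat, exists x, (INR k + 1) * N x < l1norm x).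
  { intros k. apply NNPP. intros Hk. apply Hnone. exists (INR k + 1). intros x.
    apply Rnot_lt_le. intros Hx. apply Hk. now exists x. }
  destruct (choice _ Hbad) as [x Hx].
  assert (Hpos : forall k, 0 < l1norm (x k)).
  { intros k. specialize (Hx k). pose proof (norm_nonneg N HN (x k)).
    pose proof (pos_INR k). nra. }
  assert (Hscale : forall k, 0 < / l1norm (x k)) by (intros k; apply Rinv_0_lt_compat, Hpos).
  apply (norm_not_cv0_on_l1_sphere (fun k => vscal (/ l1norm (x k)) (x k))).
  - intros k. rewrite l1norm_scal, Rabs_right by (apply Rle_ge, Rlt_le, Hscale).
    apply Rinv_l, Rgt_not_eq, Hpos.
  - apply (Un_cv_squeeze_0 _ (fun k => RinvN k)); [|exact RinvN_cv]. intros k. simpl.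
    rewrite (norm_scal N HN), Rabs_right by (apply Rle_ge, Rlt_le, Hscale).
    split; [apply Rmult_le_pos; [apply Rlt_le, Hscale | apply (norm_nonneg N HN)]|].
    specialize (Hx k). specialize (Hpos k). pose proof (pos_INR k).
    apply Rlt_le, (Rmult_lt_reg_l (l1norm (x k) * (INR k + 1))); [nra|].
    field_simplify; nra.
Qed.

Lemma in_O_cv_subseq (a : nat -> vec n -> vec n) :
  (forall k, in_O N (a k)) ->
  exists phi, strictly_incr phi /\ exists g, in_O N g /\
    forall x, Un_cv (fun k => N (vsub (a (phi k) x) (g x))) 0.
Proof.
  intros Ha. destruct l1norm_le_norm as [c Hc].
  destruct (bounded_family_cv_subseq (list_prod (enum n) (enum n))
              (fun k jm => a k (ebas (fst jm)) (snd jm)) (fun jm => c * N (ebas (fst jm))))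
    as [phi [Hphi [col Hcol]]].
  { intros [j m]. apply in_prod; apply enum_In. }
  { intros k [j m]. simpl. rewrite <- (proj2 (Ha k) (ebas j)).
    eapply Rle_trans; [apply Rabs_coord_le_l1norm | apply Hc]. }
  set (g := fun (x : vec n) m => lsum (enum n) (fun j => x j * col (j, m))).
  assert (Hcv : forall x, Un_cv (fun k => N (vsub (a (phi k) x) (g x))) 0).
  { intros x. apply norm_cv_of_coord_cv. intros m.
    apply (Un_cv_ext (fun k => lsum (enum n) (fun j => x j * a (phi k) (ebas j) m))).
    - intros k. symmetry. apply linear_map_coord, Ha.
    - apply lsum_cv. intros j. apply CV_mult; [apply Un_cv_const | apply (Hcol (j, m))]. }
  exists phi. split; [exact Hphi|]. exists g. split; [|exact Hcv].
  split; [split|].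
  - intros x y. apply functional_extensionality. intros m. unfold g, vadd.
    rewrite <- lsum_plus. apply lsum_ext. intros j _. ring.
  - intros r x. apply functional_extensionality. intros m. unfold g, vscal.
    rewrite <- lsum_scal. apply lsum_ext. intros j _. ring.
  - intros x. apply (UL_sequence (fun k => N (a (phi k) x))).
    + now apply Un_cv_norm.
    + apply (Un_cv_ext (fun _ => N x)); [intros k; symmetry; apply Ha | apply Un_cv_const].
Qed.

End Norm.

Lemma liminf_eq_0_of_subseq (s : nat -> R) (phi : nat -> nat) :
  (forall i, 0 <= s i) -> strictly_incr phi -> Un_cv (fun k => s (phi k)) 0 ->
  liminf_eq s 0.
Proof.
  intros Hs Hphi Hcv eps Heps. split.
  - exists O. intros i _. specialize (Hs i). lra.
  - intros M. destruct (Hcv eps Heps) as [K HK]. exists (phi (M + K)%nat).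
    pose proof (strictly_incr_ge_id phi Hphi (M + K)). split; [lia|].
    specialize (HK (M + K)%nat ltac:(lia)). unfold R_dist in HK.
    rewrite Rminus_0_r in HK. apply Rabs_def2 in HK. lra.
Qed.

Lemma unif_cv_compact_pointwise {n} (N : vec n -> R) d dinf (u v : vec n) :
  unif_cv_compact N d dinf -> Un_cv (fun i => d i u v) (dinf u v).
Proof.
  intros Hcv eps Heps.
  assert (Hpt : compact2 N (fun u' v' => u' = u /\ v' = v)).
  { intros I U _ Hcover. destruct (Hcover u v (conj eq_refl eq_refl)) as [i Hi].
    exists (i :: nil). intros u' v' [-> ->]. exists i. split; [now left | exact Hi]. }
  destruct (Hcv _ Hpt eps Heps) as [M HM]. exists M. intros i Hi. now apply HM.
Qed.

Lemma is_inf_approx (S : R -> Prop) (r eps : R) :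
  is_inf S r -> 0 < eps -> exists x, S x /\ x < r + eps.
Proof.
  intros [_ Hglb] Heps. apply NNPP. intros Hnone.
  assert (r + eps <= r); [|lra].
  apply Hglb. intros x Hx. apply Rnot_lt_le. intros Hlt. apply Hnone. now exists x.
Qed.

Lemma le_sqrt_sum_sq (a b : R) : 0 <= a -> a <= sqrt (a ^ 2 + b ^ 2).
Proof.
  intros Ha. rewrite <- (sqrt_pow2 a Ha) at 1. apply sqrt_le_1_alt.
  pose proof (pow2_ge_0 b). lra.
Qed.

Lemma sqrt_sum_sq_le (a b : R) : 0 <= a -> 0 <= b -> sqrt (a ^ 2 + b ^ 2) <= a + b.
Proof.
  intros Ha Hb. rewrite <- (sqrt_pow2 (a + b)) by lra. apply sqrt_le_1_alt. nra.
Qed.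

Section Distances.

Context {n : nat}.
Variables (N : vec n -> R) (H : (vec n -> vec n) -> Prop) (L : nat -> (vec n -> vec n) -> R).
Variables (d : nat -> vec n -> vec n -> R) (dinf : vec n -> vec n -> R).
Hypothesis HN : is_norm N.
Hypothesis HH : is_subgroup_O N H.
Hypothesis HL : forall i, group_norm H (L i).
Hypothesis Hd : forall i u v, is_inf (fun r => exists a, H a /\
  r = sqrt (L i a ^ 2 + N (vsub (a u) v) ^ 2)) (d i u v).
Hypothesis Hcv : unif_cv_compact N d dinf.

Lemma L_nonneg i a : H a -> 0 <= L i a.
Proof. apply (HL i). Qed.

Lemma d_le i a u v : H a -> d i u v <= L i a + N (vsub (a u) v).
Proof.
  intros Ha. eapply Rle_trans.
  - apply (proj1 (Hd i u v)). now exists a.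
  - apply sqrt_sum_sq_le; [now apply L_nonneg | apply (norm_nonneg N HN)].
Qed.

Lemma almost_minimizers u v : dinf u v = 0 ->
  exists a, (forall i, H (a i)) /\ Un_cv (fun i => L i (a i)) 0 /\
    Un_cv (fun i => N (vsub (a i u) v)) 0.
Proof.
  intros H0.
  assert (Hex : forall i, exists a, H a /\
             sqrt (L i a ^ 2 + N (vsub (a u) v) ^ 2) < d i u v + RinvN i).
  { intros i. destruct (is_inf_approx _ _ _ (Hd i u v) (cond_pos (RinvN i)))
      as [r [[a [Ha ->]] Hr]].
    now exists a. }
  destruct (choice _ Hex) as [a Ha]. exists a.
  assert (Hbound : Un_cv (fun i => d i u v + RinvN i) 0).
  { rewrite <- (Rplus_0_r 0). apply CV_plus; [|exact RinvN_cv].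
    rewrite <- H0. exact (unif_cv_compact_pointwise N d dinf u v Hcv). }
  split; [intros i; apply Ha|]. split.
  - refine (Un_cv_squeeze_0 _ _ _ Hbound). intros i. destruct (Ha i) as [Hai Hlt].
    pose proof (L_nonneg i _ Hai) as HL0.
    pose proof (le_sqrt_sum_sq (L i (a i)) (N (vsub (a i u) v)) HL0). lra.
  - refine (Un_cv_squeeze_0 _ _ _ Hbound). intros i. destruct (Ha i) as [_ Hlt].
    pose proof (norm_nonneg N HN (vsub (a i u) v)) as HN0.
    pose proof (le_sqrt_sum_sq (N (vsub (a i u) v)) (L i (a i)) HN0) as Hsq.
    rewrite Rplus_comm in Hsq. lra.
Qed.

Lemma in_G0_of_dinf_zero u v : dinf u v = 0 -> exists g, in_G0 N H L g /\ v = g u.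
Proof.
  intros H0. destruct (almost_minimizers u v H0) as [a [Ha [HLa HNa]]].
  destruct (in_O_cv_subseq N HN a) as [phi [Hphi [g [Hg Hag]]]]; [intros i; apply HH, Ha|].
  pose proof (strictly_incr_tends_to_infty phi Hphi) as Hphi_infty.
  destruct (strictly_incr_left_inverse phi Hphi) as [f [Hf Hfphi]].
  exists g. split.
  2:{ apply (norm_cv_unique N HN (fun k => a (phi k) u)).
      - exact (Un_cv_comp _ _ _ Hphi_infty HNa).
      - apply Hag. }
  split; [exact Hg|].
  (* Off the subsequence, use later terms of it: the sequence still converges to [g],
     and along [phi] it keeps the small values of [L i]. *)
  exists (fun i => a (phi (f i))). split; [intros i; apply Ha|]. split.
  - intros x. exact (Un_cv_comp _ _ _ Hf (Hag x)).
  - apply (liminf_eq_0_of_subseq _ phi); [intros i; apply L_nonneg, Ha | exact Hphi |].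
    apply (Un_cv_ext (fun k => L (phi k) (a (phi k)))); [intros k; now rewrite Hfphi|].
    exact (Un_cv_comp _ _ _ Hphi_infty HLa).
Qed.

Lemma dinf_zero_of_in_G0 u g :
  (forall u v, 0 <= dinf u v) -> in_G0 N H L g -> dinf u (g u) = 0.
Proof.
  intros Hnonneg [_ [a [Ha [Hag Hlim]]]].
  apply Rle_antisym; [|apply Hnonneg]. apply Rnot_lt_le. intros Hpos.
  remember (dinf u (g u)) as delta eqn:Hdelta.
  destruct (unif_cv_compact_pointwise N d dinf u (g u) Hcv (delta / 2)) as [M HM]; [lra|].
  destruct (Hag u (delta / 4)) as [M' HM']; [lra|].
  assert (Hquarter : 0 < delta / 4) by lra.
  destruct (proj2 (Hlim _ Hquarter) (M + M')%nat) as [i [Hi HLi]].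
  specialize (HM i ltac:(lia)). specialize (HM' i ltac:(lia)). unfold R_dist in HM, HM'.
  rewrite Rminus_0_r, Rabs_right in HM' by (apply Rle_ge, (norm_nonneg N HN)).
  rewrite <- Hdelta in HM. apply Rabs_def2 in HM.
  pose proof (d_le i (a i) u (g u) (Ha i)). lra.
Qed.

End Distances.

Theorem mainTheorem13 (n : nat) (N : vec n -> R)
  (H : (vec n -> vec n) -> Prop)
  (L : nat -> (vec n -> vec n) -> R)
  (d : nat -> vec n -> vec n -> R) (dinf : vec n -> vec n -> R) :
  is_norm N ->
  is_subgroup_O N H ->
  (forall i, group_norm H (L i)) ->
  (forall i u v, is_inf (fun r => exists a, H a /\
        r = sqrt (L i a ^ 2 + N (vsub (a u) v) ^ 2)) (d i u v)) ->
  unif_cv_compact N d dinf ->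
  semimetric dinf ->
  forall u v, dinf u v = 0 <-> exists g, in_G0 N H L g /\ v = g u.
Proof.
  intros HN HH HL Hd Hcv [Hnonneg _] u v. split.
  - eapply in_G0_of_dinf_zero; eauto.
  - intros [g [Hg ->]]. eapply dinf_zero_of_in_G0; eauto.
Qed.
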